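(* There exists a simple temporal graph $\mathcal G$ whose strict-journey reachability graph $\mathcal C(\mathcal G)$ is not isomorphic to the non-strict-journey reachability graph of any temporal graph $\mathcal H$. (For instance, $\mathcal G$ the path $a-b-c$ with $\lambda(ab)=\lambda(bc)=\{1\}$.)
   Context: A temporal graph is a triple $\mathcal G=(V,E,\lambda)$ where $V$ is a finite vertex set, $E$ is a set of undirected edges on $V$, and $\lambda:E\to 2^{\mathbb N}\setminus\{\emptyset\}$ assigns to each edge a nonempty set of presence times. The footprint of $\mathcal G$ is the static graph $(V,E)$. A contact is a pair $(e,t)$ with $e\in E$ and $t\in\lambda(e)$. A journey from $u$ to $v$ is a sequence of contacts $(e_1,t_1),\dots,(e_k,t_k)$, $k\ge 1$, such that $e_1,\dots,e_k$ form a path from $u$ to $v$ in the footprint and $t_1\le t_2\le\dots\le t_k$ (a non-strict journey); it is strict if $t_1<t_2<\dots<t_k$. $\mathcal G$ is simple if $|\lambda(e)|=1$ for every edge $e$. The reachability graph $\mathcal C(\mathcal G)$ (with respect to a chosen journey notion) is the directed graph on $V$ having an arc $(u,v)$, $u\neq v$, if and only if there is a journey from $u$ to $v$. Reachability graphs are compared up to isomorphism of directed graphs. *)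

From mathcomp Require Import all_boot.
Set Implicit Arguments. Unset Strict Implicit. Unset Printing Implicit Defensive.

(* A temporal graph on a finite vertex set V: undirected edges are given by a
   symmetric irreflexive relation [tedge]; [tlam u v t] says that time t is a
   presence time of the edge {u,v}. *)
Record tgraph (V : finType) := TGraph {
  tedge : rel V;
  tedge_sym : symmetric tedge;
  tedge_irr : irreflexive tedge;
  tlam : V -> V -> nat -> Prop;
  tlam_sym : forall u v t, tlam u v t <-> tlam v u t;
  tlam_edge : forall u v t, tlam u v t -> tedge u v;
  tlam_ne : forall u v, tedge u v -> exists t, tlam u v t
}.

Definition simple_tgraph (V : finType) (G : tgraph V) : Prop :=
  forall u v, tedge G u v -> exists! t, tlam G u v t.

(* A journey from u to v: a path u = x0, x1, ..., xk = v (k >= 1, distinct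
   vertices, consecutive ones adjacent) with times t1..tk, t_i a presence time
   of edge x_{i-1} x_i, non-decreasing (non-strict) or increasing (strict). *)
Definition journey (V : finType) (strict : bool) (G : tgraph V) (u v : V) : Prop :=
  exists (p : seq V) (ts : seq nat),
    [/\ 0 < size p, last u p = v, uniq (u :: p) & path (tedge G) u p] /\
    [/\ size ts = size p,
        (forall i, i < size p -> tlam G (nth u (u :: p) i) (nth u p i) (nth 0 ts i))
      & sorted (fun a b : nat => if strict then a < b else a <= b) ts].

Definition reach_graph (V : finType) (strict : bool) (G : tgraph V) : V -> V -> Prop :=
  fun u v => u <> v /\ journey strict G u v.

Definition digraph_iso (V W : finType) (R : V -> V -> Prop) (S : W -> W -> Prop) : Prop :=
  exists f : V -> W, bijective f /\ forall u v, R u v <-> S (f u) (f v).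

From mathcomp Require Import all_boot.
Set Implicit Arguments. Unset Strict Implicit. Unset Printing Implicit Defensive.

(* Take the path a - b - c with both edges present only at time 1. Strict
   journeys cannot use two edges with equal times, so its strict reachability
   graph has the arcs a <-> b and b <-> c but no arc between a and c.
   If a non-strict reachability graph on three vertices x, y, z had this
   shape, the first edge of a journey from x to y could not lead to z, so xy
   is an edge, at time t1 say, and likewise zy is an edge at time t2; then
   x, y, z is a non-strict journey if t1 <= t2 and z, y, x one otherwise. *)

Section Journeys.
Variables (V : finType) (G : tgraph V).

Lemma tlam_neq u v t : tlam G u v t -> u != v.
Proof.
by move=> /tlam_edge; apply: contraTneq => ->; rewrite (tedge_irr G).
Qed.

Lemma journey_edge s u v t : tlam G u v t -> journey s G u v.
Proof.
move=> uv; exists [:: v], [:: t]; split; split=> //=.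
- by rewrite inE (tlam_neq uv).
- by rewrite (tlam_edge uv).
- by case.
Qed.

Lemma nonstrict_journey_edge2 u v w t1 t2 :
  u != w -> tlam G u v t1 -> tlam G v w t2 -> t1 <= t2 -> journey false G u w.
Proof.
move=> uw uv vw le12; exists [:: v; w], [:: t1; t2]; split; split=> //=.
- by rewrite !inE negb_or (tlam_neq uv) uw (tlam_neq vw).
- by rewrite (tlam_edge uv) (tlam_edge vw).
- by case=> [|[|]].
- by rewrite le12.
Qed.

Lemma reach_graph_edge s u v t : tlam G u v t -> reach_graph s G u v.
Proof. by move=> uv; split; [apply/eqP/(tlam_neq uv) | apply: journey_edge uv]. Qed.

Lemma reach_graph_first_edge s u v :
  reach_graph s G u v -> exists w t, tlam G u w t /\ reach_graph s G u w.
Proof.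
case=> _ [[|w p] [ts [[//= _ _ _ _] [_ first_edge _]]]].
have uw := first_edge 0 isT.
by exists w, (nth 0 ts 0); split; last apply: reach_graph_edge uw.
Qed.

(* With a single presence time, consecutive times of a strict journey would
   have to be both equal and increasing. *)
Lemma strict_journey_const_time c u v :
  (forall x y t, tlam G x y t -> t = c) -> journey true G u v -> tedge G u v.
Proof.
move=> const [[|w [|w' p]] [ts [[//= _ <- _ uw] [size_ts times sorted_ts]]]].
  by rewrite andbT in uw.
case: ts size_ts times sorted_ts => [|t [|t' ts]] //= _ times /andP [lt_tt' _].
have /= t_c := const _ _ _ (times 0 isT); have /= t'_c := const _ _ _ (times 1 isT).
by rewrite t_c t'_c ltnn in lt_tt'.
Qed.

End Journeys.

Section ThreeVertices.
Variables (W : finType) (H : tgraph W).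

Lemma reach_graph_edge_or_other s u v o :
  (forall w, [\/ w = u, w = v | w = o]) ->
  reach_graph s H u v -> (exists t, tlam H u v t) \/ reach_graph s H u o.
Proof.
move=> cover /reach_graph_first_edge [w [t [uw Ruw]]].
by case: (cover w) => ew; subst w; [case: Ruw | left; exists t | right].
Qed.

Lemma nonstrict_reach_three x y z :
  (forall w, [\/ w = x, w = y | w = z]) -> x != z ->
  reach_graph false H x y -> reach_graph false H z y ->
  reach_graph false H x z \/ reach_graph false H z x.
Proof.
move=> cover xz Rxy Rzy.
have cover' w : [\/ w = z, w = y | w = x] by case: (cover w); constructor.
case: (reach_graph_edge_or_other cover Rxy) => [[t1 xy] | ]; last by left.
case: (reach_graph_edge_or_other cover' Rzy) => [[t2 zy] | ]; last by right.
have yx : tlam H y x t1 by apply/tlam_sym.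
have yz : tlam H y z t2 by apply/tlam_sym.
have zx : z != x by rewrite eq_sym.
case: (leqP t1 t2) => [le12 | /ltnW le21]; [left | right]; split; try exact/eqP.
- exact: nonstrict_journey_edge2 xz xy yz le12.
- exact: nonstrict_journey_edge2 zx zy yx le21.
Qed.

End ThreeVertices.

Definition ord_path_rel n : rel 'I_n :=
  fun i j => (i.+1 == j :> nat) || (j.+1 == i :> nat).

Lemma ord_path_rel_sym n : symmetric (@ord_path_rel n).
Proof. by move=> i j; rewrite /ord_path_rel orbC. Qed.

Lemma ord_path_rel_irr n : irreflexive (@ord_path_rel n).
Proof. by move=> i; rewrite /ord_path_rel orbb eqn_leq ltnn. Qed.

Section ConstPath.
Variables (n c : nat).

Definition const_path_time (i j : 'I_n) (t : nat) : Prop := ord_path_rel i j /\ t = c.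

Lemma const_path_time_sym i j t : const_path_time i j t <-> const_path_time j i t.
Proof. by rewrite /const_path_time ord_path_rel_sym. Qed.

Lemma const_path_time_edge i j t : const_path_time i j t -> ord_path_rel i j.
Proof. by case. Qed.

Lemma const_path_time_ne i j : ord_path_rel i j -> exists t, const_path_time i j t.
Proof. by exists c. Qed.

Definition const_path : tgraph 'I_n :=
  TGraph (@ord_path_rel_sym n) (@ord_path_rel_irr n)
    const_path_time_sym const_path_time_edge const_path_time_ne.

Lemma const_path_simple : simple_tgraph const_path.
Proof. by move=> i j ij; exists c; split=> // t []. Qed.

Lemma reach_graph_strict_const_path i j :
  reach_graph true const_path i j <-> ord_path_rel i j.
Proof.
split=> [[_] | ij]; first by apply: (@strict_journey_const_time _ _ c) => x y t [].
exact: (@reach_graph_edge _ const_path _ _ _ c).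
Qed.

End ConstPath.

Theorem mainTheorem4 :
  exists (V : finType) (G : tgraph V),
    simple_tgraph G /\
    forall (W : finType) (H : tgraph W),
      ~ digraph_iso (reach_graph true G) (reach_graph false H).
Proof.
exists ('I_3 : finType), (const_path 3 1); split; first exact: const_path_simple.
move=> W H [f [[g fK gK] iso]].
pose a0 : 'I_3 := ord0; pose a1 : 'I_3 := inord 1; pose a2 : 'I_3 := ord_max.
have R a b : ord_path_rel a b -> reach_graph false H (f a) (f b).
  by move=> ab; apply/iso/reach_graph_strict_const_path.
have notR a b : ~~ ord_path_rel a b -> ~ reach_graph false H (f a) (f b).
  by move=> /negP not_ab /iso /reach_graph_strict_const_path.
have cover w : [\/ w = f a0, w = f a1 | w = f a2].
  rewrite -(gK w); case: (g w) => [[|[|[|m]]] lt_m3] //;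
    [constructor 1 | constructor 2 | constructor 3]; congr f; apply: val_inj;
    by rewrite /= ?inordK.
have f02 : f a0 != f a2 by rewrite (can_eq fK).
have R01 : reach_graph false H (f a0) (f a1) by apply: R; rewrite /ord_path_rel inordK.
have R21 : reach_graph false H (f a2) (f a1) by apply: R; rewrite /ord_path_rel inordK.
by case: (nonstrict_reach_three cover f02 R01 R21); apply: notR.
Qed.
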